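(* Let $A_1,A_2\in\mathbb{R}^{n\times n}$ be symmetric positive semidefinite and $\mathcal{A}=(A_1,A_2)$. Then $\mathrm{Opt}(\mathcal{A})=\mathrm{OptSDP}(\mathcal{A})$.
   Context: Here $\mathbb{K}=\mathbb{R}$: $\mathrm{Opt}(\mathcal{A})=\max_{x\in\mathbb{R}^n,\|x\|=1}\big(\prod_{i=1}^d x^TA_ix\big)^{1/d}$ and $\mathrm{OptSDP}(\mathcal{A})=\max\big\{\big(\prod_{i=1}^d\operatorname{Tr}(A_iX)\big)^{1/d}: X\in\mathbb{R}^{n\times n}\text{ symmetric},\ X\succeq0,\ \operatorname{Tr}X=1\big\}$, with $d=2$. *)

From mathcomp Require Import all_boot all_order all_algebra.
From mathcomp Require Import all_classical all_reals.
Set Implicit Arguments. Unset Strict Implicit. Unset Printing Implicit Defensive.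
Import Order.TTheory GRing.Theory Num.Theory.
Local Open Scope ring_scope.
Local Open Scope classical_set_scope.

Definition symmetric_mx (R : realType) (n : nat) (A : 'M[R]_n) : Prop := A^T = A.

Definition qform (R : realType) (n : nat) (A : 'M[R]_n) (x : 'cV[R]_n) : R :=
  (x^T *m A *m x) 0 0.

Definition psd (R : realType) (n : nat) (A : 'M[R]_n) : Prop :=
  symmetric_mx A /\ forall x : 'cV[R]_n, 0 <= qform A x.

Definition unit_vec (R : realType) (n : nat) (x : 'cV[R]_n) : Prop :=
  (x^T *m x) 0 0 = 1.

(* Opt(A1,A2) = max_{||x||=1} (prod_{i=1}^2 x^T A_i x)^{1/2}
   (the maximum is attained by compactness, so it equals the sup) *)
Definition Opt2 (R : realType) (n : nat) (A1 A2 : 'M[R]_n) : R :=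
  sup [set Num.sqrt (qform A1 x * qform A2 x) | x in [set x | unit_vec x]].

Definition OptSDP2 (R : realType) (n : nat) (A1 A2 : 'M[R]_n) : R :=
  sup [set Num.sqrt (\tr (A1 *m X) * \tr (A2 *m X)) |
        X in [set X : 'M[R]_n | psd X /\ \tr X = 1]].

From mathcomp Require Import all_boot all_order all_algebra.
From mathcomp Require Import all_classical all_reals.
From mathcomp Require Import ring lra.
Import Order.TTheory GRing.Theory Num.Theory.
Local Open Scope ring_scope.

(* "<=" is immediate: a unit vector x gives the feasible matrix X = x x^T with
   Tr(A_i X) = x^T A_i x.  For ">=" we round every psd X to a vector w with
   |w|^2 = Tr X and Tr(A_i X) <= w^T A_i w for i = 1, 2 (lemma [psd_rounding]);
   this holds for ARBITRARY matrices A1, A2.  The rounding peels rank-one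
   pieces y y^T off X (one Cholesky step, [psd_peel]) and merges the vectors
   obtained two at a time ([merge_two]).  Merging y and z amounts to finding a
   combination a y + b z on which two quadratic forms in (a, b) are
   simultaneously nonnegative; these forms are linear in (a^2 - b^2, ab), so
   this reduces to two half-planes of R^2 meeting outside the origin
   ([halfplanes_meet]) and to (a, b) |-> (a^2 - b^2, ab) being onto
   ([realize_sqr_diff_mul]).  Applying the rounding to (A, -A) also shows
   Tr(A X) >= 0 for psd A and X, which makes the square root comparison valid. *)

Lemma realize_sqr_diff_mul {R : rcfType} (c s : R) :
  exists a b : R, a ^+ 2 - b ^+ 2 = c /\ a * b = s.
Proof.
set r := Num.sqrt (c ^+ 2 + 4 * s ^+ 2).
have r_ge0 : 0 <= r by apply: sqrtr_ge0.
have r2 : r ^+ 2 = c ^+ 2 + 4 * s ^+ 2 by rewrite sqr_sqrtr //; nra.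
have [rc0|rc_neq0] := eqVneq (r + c) 0.
  have s0 : s = 0 by nra.
  exists 0, (Num.sqrt (- c)); rewrite sqr_sqrtr; last by nra.
  by split; [lra | rewrite mul0r s0].
have rc_gt0 : 0 < r + c by rewrite lt_neqAle eq_sym rc_neq0 /=; nra.
set a := Num.sqrt ((r + c) / 2).
have a2 : a ^+ 2 = (r + c) / 2 by rewrite sqr_sqrtr //; lra.
have a_neq0 : a != 0 by rewrite gt_eqF // sqrtr_gt0; lra.
exists a, (s / a); split; last by rewrite mulrC divfK.
have s2 : s ^+ 2 = (r + c) * (r - c) / 4 by nra.
by rewrite expr_div_n a2 s2; field; rewrite gt_eqF.
Qed.

Lemma halfplanes_meet {R : realFieldType} (a1 b1 a2 b2 : R) : exists c s : R,
  (c != 0 \/ s != 0) /\ 0 <= a1 * c + b1 * s /\ 0 <= a2 * c + b2 * s.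
Proof.
have [h1|] := boolP ((a1 != 0) || (b1 != 0)).
  have nz : (- b1 != 0) \/ (a1 != 0).
    by case/orP: h1 => h; [right | left; rewrite oppr_eq0].
  have [hD|hD] := lerP 0 (a1 * b2 - a2 * b1).
    by exists (- b1), a1; split => //; split; nra.
  exists b1, (- a1); split; last by split; nra.
  by case: nz => h; [left; rewrite -oppr_eq0 | right; rewrite oppr_eq0].
rewrite negb_or !negbK => /andP[/eqP -> /eqP ->].
have [h2|] := boolP ((a2 != 0) || (b2 != 0)).
  by exists a2, b2; split; [apply/orP | split; nra].
rewrite negb_or !negbK => /andP[/eqP -> /eqP ->].
by exists 1, 0; split; [left; exact: oner_neq0 | split; lra].
Qed.

Section Rounding.
Context {R : realType} {n : nat}.

Definition bform (A : 'M[R]_n) (x y : 'cV[R]_n) : R := (x^T *m A *m y) 0 0.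
Definition sqnorm (x : 'cV[R]_n) : R := (x^T *m x) 0 0.

Lemma bformDl (A : 'M[R]_n) (x y z : 'cV[R]_n) (a b : R) :
  bform A (a *: x + b *: y) z = a * bform A x z + b * bform A y z.
Proof. by rewrite /bform !linearD /= !linearZ /= !mulmxDl -!scalemxAl !mxE. Qed.

Lemma bformDr (A : 'M[R]_n) (x y z : 'cV[R]_n) (a b : R) :
  bform A z (a *: x + b *: y) = a * bform A z x + b * bform A z y.
Proof. by rewrite /bform !mulmxDr -!scalemxAr !mxE. Qed.

Lemma bformZl (A : 'M[R]_n) (x z : 'cV[R]_n) (c : R) :
  bform A (c *: x) z = c * bform A x z.
Proof. by rewrite /bform linearZ /= -!scalemxAl mxE. Qed.

Lemma bform_delta (A : 'M[R]_n) (i j : 'I_n) :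
  bform A (delta_mx i 0) (delta_mx j 0) = A i j.
Proof. by rewrite /bform trmx_delta -rowE -colE !mxE. Qed.

Lemma bform_sym (A : 'M[R]_n) (x y : 'cV[R]_n) :
  symmetric_mx A -> bform A x y = bform A y x.
Proof.
move=> symA; transitivity ((x^T *m A *m y)^T 0 0); first by rewrite mxE.
by rewrite !trmx_mul trmxK symA mulmxA.
Qed.

Lemma qform_comb (A : 'M[R]_n) (y z : 'cV[R]_n) (a b : R) :
  qform A (a *: y + b *: z) =
  a ^+ 2 * qform A y + a * b * (bform A y z + bform A z y) + b ^+ 2 * qform A z.
Proof. by rewrite /qform -/(bform _ _ _) bformDl !bformDr /bform; ring. Qed.

Lemma qformZ (A : 'M[R]_n) (x : 'cV[R]_n) (c : R) :
  qform A (c *: x) = c ^+ 2 * qform A x.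
Proof. by rewrite -[c *: x]addr0 -(scale0r x) qform_comb; ring. Qed.

Lemma qform0 (A : 'M[R]_n) : qform A 0 = 0.
Proof. by rewrite -(scale0r (0 : 'cV[R]_n)) qformZ expr0n mul0r. Qed.

Lemma qformB (A B : 'M[R]_n) (x : 'cV[R]_n) :
  qform (A - B) x = qform A x - qform B x.
Proof. by rewrite /qform mulmxBr mulmxBl !mxE. Qed.

Lemma qformN (A : 'M[R]_n) (x : 'cV[R]_n) : qform (- A) x = - qform A x.
Proof. by rewrite /qform mulmxN mulNmx mxE. Qed.

Lemma qform_delta (A : 'M[R]_n) (i : 'I_n) : qform A (delta_mx i 0) = A i i.
Proof. exact: bform_delta. Qed.

Lemma sqnormE (x : 'cV[R]_n) : sqnorm x = qform 1%:M x.
Proof. by rewrite /sqnorm /qform mulmx1. Qed.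

Lemma sqnorm_sum (x : 'cV[R]_n) : sqnorm x = \sum_k x k 0 ^+ 2.
Proof. by rewrite /sqnorm mxE; apply: eq_bigr => k _; rewrite mxE expr2. Qed.

Lemma sqnorm_ge0 (x : 'cV[R]_n) : 0 <= sqnorm x.
Proof. by rewrite sqnorm_sum; apply: sumr_ge0 => k _; apply: sqr_ge0. Qed.

Lemma sqnorm_eq0 (x : 'cV[R]_n) : sqnorm x = 0 -> x = 0.
Proof.
rewrite sqnorm_sum => /psumr_eq0P x2_eq0; apply/matrixP => i j.
rewrite (ord1 j) mxE; have /eqP := x2_eq0 (fun k _ => sqr_ge0 _) i isT.
by rewrite sqrf_eq0 => /eqP.
Qed.

Lemma tr_rank1 (A : 'M[R]_n) (y : 'cV[R]_n) : \tr (A *m (y *m y^T)) = qform A y.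
Proof. by rewrite mulmxA mxtrace_mulC mulmxA /mxtrace big_ord1. Qed.

Lemma tr_rank1_id (y : 'cV[R]_n) : \tr (y *m y^T) = sqnorm y.
Proof. by rewrite -[y *m y^T]mul1mx tr_rank1 sqnormE. Qed.

Lemma qform_rank1 (y x : 'cV[R]_n) : qform (y *m y^T) x = bform 1%:M y x ^+ 2.
Proof.
rewrite /qform /bform mulmx1 !mulmxA -mulmxA mxE big_ord1 expr2; congr (_ * _).
transitivity ((x^T *m y)^T 0 0); first by rewrite [RHS]mxE.
by rewrite trmx_mul trmxK.
Qed.

Lemma psd_rank1 (y : 'cV[R]_n) : psd (y *m y^T).
Proof.
split; first by rewrite /symmetric_mx trmx_mul trmxK.
by move=> x; rewrite qform_rank1 sqr_ge0.
Qed.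

Lemma psd_isotropic (X : 'M[R]_n) (u x : 'cV[R]_n) :
  psd X -> qform X u = 0 -> bform X u x = 0.
Proof.
case=> symX posX qu; apply/eqP/negPn/negP => b_neq0.
set t := - (qform X x + 1) / (2 * bform X u x).
have := posX (t *: u + 1 *: x).
rewrite qform_comb qu (bform_sym X x u symX) expr1n mul1r mulr1 mulr0 add0r.
have -> : t * (bform X u x + bform X u x) = - (qform X x + 1) by rewrite /t; field.
lra.
Qed.

Lemma psd_cauchy_schwarz (X : 'M[R]_n) (u x : 'cV[R]_n) :
  psd X -> 0 < qform X u -> bform X u x ^+ 2 <= qform X u * qform X x.
Proof.
case=> symX posX qu.
set t := - bform X u x / qform X u.
have := posX (t *: u + 1 *: x).
rewrite qform_comb (bform_sym X x u symX) expr1n mul1r mulr1.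
have -> : t ^+ 2 * qform X u + t * (bform X u x + bform X u x) + qform X x =
    qform X x - bform X u x ^+ 2 / qform X u.
  by rewrite /t; field; rewrite gt_eqF.
rewrite subr_ge0 ler_pdivrMr //; lra.
Qed.

Lemma psd_diag_ge0 (X : 'M[R]_n) (i : 'I_n) : psd X -> 0 <= X i i.
Proof. by case=> _ posX; rewrite -qform_delta. Qed.

(* The indices of the nonzero diagonal entries; the rounding inducts on its size. *)
Definition diag_support (X : 'M[R]_n) : pred 'I_n := [pred i | X i i != 0].

Lemma psd_eq0 {X : 'M[R]_n} : psd X -> #|diag_support X| = 0%N -> X = 0.
Proof.
move=> psdX /card0_eq diag0; apply/matrixP => i j.
rewrite mxE -bform_delta; apply: psd_isotropic => //.
by rewrite qform_delta; apply/eqP; move: (diag0 i); rewrite !inE => /negbFE.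
Qed.

(* One Cholesky step: for X i i > 0, X = X' + y y^T with y = X e_i / sqrt(X i i),
   where X' is psd (by Cauchy-Schwarz), has a zero i-th diagonal entry, and has
   no nonzero diagonal entry that X lacks. *)
Lemma psd_peel {X : 'M[R]_n} {i : 'I_n} : psd X -> X i i != 0 ->
  exists (X' : 'M[R]_n) (y : 'cV[R]_n), X = X' + y *m y^T /\ psd X' /\
    (#|diag_support X'| < #|diag_support X|)%N.
Proof.
move=> psdX Xii_neq0; have [symX _] := psdX.
set p := X i i; set e : 'cV[R]_n := delta_mx i 0.
have p_gt0 : 0 < p by rewrite lt_neqAle eq_sym Xii_neq0 psd_diag_ge0.
set s := Num.sqrt p.
have s2 : s ^+ 2 = p by rewrite sqr_sqrtr // ltW.
set y := s^-1 *: (X *m e); exists (X - y *m y^T), y.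
have yE x : bform 1%:M y x = s^-1 * bform X e x.
  by rewrite bformZl /bform trmx_mul symX mulmx1.
have qform_peel x : qform (X - y *m y^T) x = qform X x - bform X e x ^+ 2 / p.
  by rewrite qformB qform_rank1 yE exprMn exprVn s2 mulrC.
have diag_peel j : (X - y *m y^T) j j = X j j - X i j ^+ 2 / p.
  by rewrite -!qform_delta qform_peel bform_delta.
have psd_peeled : psd (X - y *m y^T).
  split; first by rewrite /symmetric_mx raddfB /= trmx_mul trmxK symX.
  move=> x; rewrite qform_peel subr_ge0 ler_pdivrMr // mulrC.
  by have := psd_cauchy_schwarz X e x psdX; rewrite /e qform_delta; apply.
split; first by rewrite subrK.
split => //; apply: proper_card; apply/properP; split.
  apply/fintype.subsetP => j /=; apply: contra => /eqP Xjj0.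
  apply/eqP/le_anti; rewrite psd_diag_ge0 // andbT diag_peel Xjj0 sub0r oppr_le0.
  by apply: divr_ge0; [apply: sqr_ge0 | apply: ltW].
by exists i => //=; rewrite negbK diag_peel /p; apply/eqP; field.
Qed.

Definition merges (A1 A2 : 'M[R]_n) (y z w : 'cV[R]_n) : Prop :=
  sqnorm w = sqnorm y + sqnorm z /\
  qform A1 y + qform A1 z <= qform A1 w /\ qform A2 y + qform A2 z <= qform A2 w.

Lemma rescale_sqnorm (v : 'cV[R]_n) (t : R) : 0 <= t -> 0 < sqnorm v ->
  exists w : 'cV[R]_n, sqnorm w = t /\
    forall A : 'M[R]_n, qform A w = t / sqnorm v * qform A v.
Proof.
move=> t_ge0 v_gt0; have k_ge0 : 0 <= t / sqnorm v by rewrite divr_ge0 // ltW.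
exists (Num.sqrt (t / sqnorm v) *: v).
split=> [|A]; last by rewrite qformZ sqr_sqrtr.
by rewrite [LHS]sqnormE qformZ -sqnormE sqr_sqrtr // divfK ?gt_eqF.
Qed.

Lemma merge_parallel (A1 A2 : 'M[R]_n) (z : 'cV[R]_n) (g : R) :
  exists w : 'cV[R]_n, merges A1 A2 (g *: z) z w.
Proof.
have g_ge0 : 0 <= 1 + g ^+ 2 by rewrite addr_ge0 ?sqr_ge0.
exists (Num.sqrt (1 + g ^+ 2) *: z).
rewrite /merges !sqnormE !qformZ sqr_sqrtr // !mulrDl !mul1r.
by split; [rewrite addrC | split; rewrite addrC].
Qed.

Lemma merge_two (A1 A2 : 'M[R]_n) (y z : 'cV[R]_n) :
  exists w : 'cV[R]_n, merges A1 A2 y z w.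
Proof.
set p := sqnorm y; set q := sqnorm z.
pose m (A : 'M[R]_n) := bform A y z + bform A z y.
pose coef_c (A : 'M[R]_n) := q * qform A y - p * qform A z.
pose coef_s (A : 'M[R]_n) := (p + q) * m A - (qform A y + qform A z) * m 1%:M.
have [c [s [cs_neq0 [h1 h2]]]] :=
  halfplanes_meet (coef_c A1) (coef_s A1) (coef_c A2) (coef_s A2).
have [a [b [cE sE]]] := realize_sqr_diff_mul c s.
set v := a *: y + b *: z.
(* The gain of v on A, relative to the norm, is linear in (a^2 - b^2, ab). *)
have gain A : 0 <= coef_c A * c + coef_s A * s ->
    (qform A y + qform A z) * sqnorm v <= (p + q) * qform A v.
  move=> gain_ge0; rewrite -subr_ge0 (_ : _ - _ = coef_c A * c + coef_s A * s) //.
  rewrite /coef_c /coef_s /m /v sqnormE !qform_comb -!sqnormE.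
  by rewrite -/p -/q -cE -sE; ring.
have [v_eq0|v_neq0] := eqVneq (sqnorm v) 0; last first.
  have v_gt0 : 0 < sqnorm v by rewrite lt_neqAle eq_sym v_neq0 sqnorm_ge0.
  have pq_ge0 : 0 <= p + q by rewrite addr_ge0 ?sqnorm_ge0.
  have [w [wE qwE]] := rescale_sqnorm _ _ pq_ge0 v_gt0.
  exists w; split => //; rewrite !qwE.
  by split; rewrite mulrAC ler_pdivlMr //; apply: gain.
move/sqnorm_eq0: v_eq0 => /eqP; rewrite addr_eq0 => /eqP ayE.
have [a0|a_neq0] := eqVneq a 0.
  have b_neq0 : b != 0.
    apply: contraPneq cs_neq0 => b0.
    by rewrite -cE -sE a0 b0 expr0n subrr mul0r eqxx; case.
  move: ayE; rewrite a0 scale0r -scaleNr => /esym/eqP.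
  rewrite scaler_eq0 oppr_eq0 (negbTE b_neq0) /= => /eqP z0.
  have q0 : q = 0 by rewrite /q z0 sqnormE qform0.
  exists y; rewrite /merges -/q q0 z0 !qform0 !addr0.
  by split => //; split; apply: lexx.
have -> : y = (- (b / a)) *: z.
  by rewrite -(scalerK a_neq0 y) ayE scalerN scalerA scaleNr mulrC.
exact: merge_parallel.
Qed.

Definition rounds (A1 A2 X : 'M[R]_n) (w : 'cV[R]_n) : Prop :=
  sqnorm w = \tr X /\ \tr (A1 *m X) <= qform A1 w /\ \tr (A2 *m X) <= qform A2 w.

(* Every psd matrix can be rounded: by induction on its diagonal support,
   peel off y y^T, round the rest to w', and merge w' with y. *)
Lemma psd_rounding (A1 A2 : 'M[R]_n) {X : 'M[R]_n} :
  psd X -> exists w, rounds A1 A2 X w.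
Proof.
have [k] : exists k, (#|diag_support X| <= k)%N by exists #|diag_support X|.
elim: k X => [|k IH] X size_le psdX.
  move: size_le; rewrite leqn0 => /eqP /(psd_eq0 psdX) ->.
  exists 0; rewrite /rounds sqnormE qform0 !mulmx0 !mxtrace0 !qform0.
  by split => //; split; apply: lexx.
have [/IH|] := leqP #|diag_support X| k; first exact.
move=> /(leq_ltn_trans (leq0n k)) /card_gt0P [i /= Xii_neq0].
have [X' [y [XE [psdX' size_lt]]]] := psd_peel psdX Xii_neq0.
have [w' [nw' [le1 le2]]] := IH X' (leq_trans size_lt size_le) psdX'.
have [w [nw [ge1 ge2]]] := merge_two A1 A2 w' y.
exists w; rewrite /rounds XE !mulmxDr !mxtraceD !tr_rank1 tr_rank1_id nw nw'.
by split => //; split; [apply: le_trans ge1 | apply: le_trans ge2]; rewrite lerD2r.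
Qed.

(* Tr(A X) >= 0 for psd A, X: round X for the pair (A, -A). *)
Lemma tr_mul_psd_ge0 (A X : 'M[R]_n) : psd A -> psd X -> 0 <= \tr (A *m X).
Proof.
move=> [_ posA] psdX; have [w [_ [_ le_neg]]] := psd_rounding A (- A) psdX.
move: le_neg; rewrite mulNmx raddfN /= qformN lerN2.
exact: le_trans.
Qed.

End Rounding.

Theorem mainTheorem6 (R : realType) (n : nat) (A1 A2 : 'M[R]_n) :
  psd A1 -> psd A2 -> Opt2 A1 A2 = OptSDP2 A1 A2.
Proof.
(* Both sups are compared through the downward closures of the two value sets,
   which we show to coincide. *)
move=> psdA1 psdA2; rewrite /Opt2 /OptSDP2 -sup_down -[RHS]sup_down; congr sup.
apply/seteqP; split => r /downP [t [x hx <-] le_rt]; apply/downP.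
  (* A unit vector x yields the feasible rank-one matrix x x^T. *)
  exists (Num.sqrt (qform A1 x * qform A2 x)) => //.
  exists (x *m x^T); last by rewrite !tr_rank1.
  by split; [exact: psd_rank1 | rewrite tr_rank1_id].
(* A feasible X is rounded to a unit vector doing at least as well. *)
case: hx => psdX trX1.
have [w [nw [le1 le2]]] := psd_rounding A1 A2 psdX.
exists (Num.sqrt (qform A1 w * qform A2 w)).
  by exists w => //; move: nw; rewrite trX1.
apply: (le_trans le_rt); apply: ler_wsqrtr.
by apply: ler_pM => //; exact: tr_mul_psd_ge0.
Qed.
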